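(* Let $A\in\mathbb{R}^{n\times n}$, $B\in\mathbb{R}^{n\times b}$, $C\in\mathbb{R}^{c\times n}$ with $(A,B)$ stabilizable and $(A,C)$ detectable. Let $X_\infty\in\mathbb{R}^{n\times n}$ be the unique symmetric positive semidefinite solution of the algebraic Riccati equation $0=A^TX+XA-XBB^TX+C^TC$, and let $q_1,\dots,q_n\in\mathbb{R}^n$ be an orthonormal system of eigenvectors of $X_\infty$ with corresponding eigenvalues $\lambda_1(X_\infty)\ge\dots\ge\lambda_n(X_\infty)$ (i.e. $X_\infty q_i=\lambda_i(X_\infty)q_i$). Let $X\colon[0,\infty)\to\mathbb{R}^{n\times n}$ be the unique solution of the differential Riccati equation $$\dot X(t)=A^TX(t)+X(t)A-X(t)BB^TX(t)+C^TC,\qquad X(0)=0.$$ Then for all $i,j=1,\dots,n$ and all $t\ge0$, $$|q_i^TX(t)q_j|\le\sqrt{\lambda_i(X_\infty)\,\lambda_j(X_\infty)}.$$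
   Context: $\lambda_k(\cdot)$ denotes the $k$-th largest eigenvalue of a real symmetric matrix. The differential Riccati equation with zero initial value has a unique solution on $[0,\infty)$. *)

From HB Require Import structures.
From mathcomp Require Import all_boot all_order all_algebra.
From mathcomp Require Import all_classical all_reals all_analysis.
From mathcomp Require Import complex.
Set Implicit Arguments. Unset Strict Implicit. Unset Printing Implicit Defensive.
Import Order.TTheory GRing.Theory Num.Theory.
Import numFieldNormedType.Exports.
Local Open Scope classical_set_scope.
Local Open Scope ring_scope.

Definition is_eigenvalueC (R : realType) (n : nat) (M : 'M[R]_n)
  (mu : complex R) : Prop :=
  exists v : 'cV[complex R]_n, v != 0 /\
    map_mx (real_complex R) M *m v = mu *: v.

Definition hurwitz (R : realType) (n : nat) (M : 'M[R]_n) : Prop :=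
  forall mu : complex R, is_eigenvalueC M mu -> Re mu < 0.

Definition stabilizable (R : realType) (n b : nat)
  (A : 'M[R]_n) (B : 'M[R]_(n, b)) : Prop :=
  exists K : 'M[R]_(b, n), hurwitz (A - B *m K).

Definition detectable (R : realType) (n c : nat)
  (A : 'M[R]_n) (C : 'M[R]_(c, n)) : Prop :=
  exists L : 'M[R]_(n, c), hurwitz (A - L *m C).

Definition symmetric_mx (R : realType) (n : nat) (X : 'M[R]_n) : Prop :=
  X^T = X.

Definition psd_mx (R : realType) (n : nat) (X : 'M[R]_n) : Prop :=
  symmetric_mx X /\ forall v : 'cV[R]_n, 0 <= (v^T *m X *m v) 0 0.

Definition riccati (R : realType) (n b c : nat) (A : 'M[R]_n)
  (B : 'M[R]_(n, b)) (C : 'M[R]_(c, n)) (X : 'M[R]_n) : 'M[R]_n :=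
  A^T *m X + X *m A - X *m B *m B^T *m X + C^T *m C.

Definition DRE_solution (R : realType) (n b c : nat) (A : 'M[R]_n)
  (B : 'M[R]_(n, b)) (C : 'M[R]_(c, n)) (X : R -> 'M[R]_n) : Prop :=
  X 0 = 0 /\
  (forall i j : 'I_n, (fun s => X s i j) @ 0^'+ --> (0 : R)) /\
  (forall t : R, 0 < t -> forall i j : 'I_n,
     is_derive t (1 : R) (fun s => X s i j) (riccati A B C (X t) i j)).

(* The Riccati flow started at 0 stays in the order interval [0, Xinf].  At a boundary
   point of the cone of positive semidefinite matrices the vector field points inwards:
   if X(t) v = -mu v with mu > 0, then v^T Ric(X(t)) v + k mu |v|^2 > 0 for a constant k,
   so X(t) + e exp(k t) I stays positive definite for every small e > 0; the same holds
   for Xinf - X(t) because Ric(Xinf) = 0.  This needs X(t) to be symmetric, which follows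
   from Gronwall's inequality for |X - X^T|^2.  Finally 0 <= X(t) <= Xinf, and the
   Cauchy-Schwarz inequality for the form of X(t) gives
   |q_i^T X(t) q_j|^2 <= (q_i^T X(t) q_i) (q_j^T X(t) q_j) <= lam_i lam_j. *)

From HB Require Import structures.
From mathcomp Require Import all_boot all_order all_algebra.
From mathcomp Require Import all_classical all_reals all_analysis.
From mathcomp Require Import complex.
From mathcomp Require Import ring lra.
Import Order.TTheory GRing.Theory Num.Theory.
Import numFieldNormedType.Exports.
Set Implicit Arguments. Unset Strict Implicit. Unset Printing Implicit Defensive.
Local Open Scope ring_scope.
Local Open Scope classical_set_scope.

Section QuadraticForm.
Variable R : realFieldType.
Implicit Types (a s : R).

Definition vdot m (u v : 'cV[R]_m) : R := (u^T *m v) 0 0.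
Definition bform n (M : 'M[R]_n) (u v : 'cV[R]_n) : R := vdot u (M *m v).
Definition qform n (M : 'M[R]_n) (v : 'cV[R]_n) : R := bform M v v.

Lemma vdot_sum m (u v : 'cV[R]_m) : vdot u v = \sum_i u i 0 * v i 0.
Proof. by rewrite /vdot mxE; apply: eq_bigr => i _; rewrite mxE. Qed.

Lemma vdotC m (u v : 'cV[R]_m) : vdot u v = vdot v u.
Proof. by rewrite !vdot_sum; apply: eq_bigr => i _; rewrite mulrC. Qed.

Lemma vdotDr m (u v w : 'cV[R]_m) : vdot u (v + w) = vdot u v + vdot u w.
Proof. by rewrite /vdot mulmxDr mxE. Qed.

Lemma vdotDl m (u v w : 'cV[R]_m) : vdot (u + v) w = vdot u w + vdot v w.
Proof. by rewrite vdotC vdotDr !(vdotC w). Qed.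

Lemma vdotZr m a (u v : 'cV[R]_m) : vdot u (a *: v) = a * vdot u v.
Proof. by rewrite /vdot -scalemxAr mxE. Qed.

Lemma vdotZl m a (u v : 'cV[R]_m) : vdot (a *: u) v = a * vdot u v.
Proof. by rewrite vdotC vdotZr vdotC. Qed.

Lemma vdot_mulmxl m k (M : 'M[R]_(k, m)) u v : vdot (M *m u) v = vdot u (M^T *m v).
Proof. by rewrite /vdot trmx_mul mulmxA. Qed.

Lemma vdot_ge0 m (v : 'cV[R]_m) : 0 <= vdot v v.
Proof. by rewrite vdot_sum sumr_ge0 // => i _; rewrite -expr2 sqr_ge0. Qed.

Lemma vdot_gt0 m (v : 'cV[R]_m) : v != 0 -> 0 < vdot v v.
Proof.
move=> /eqP v0; rewrite lt_def vdot_ge0 andbT; apply: contra_notN v0.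
rewrite vdot_sum psumr_eq0 => [/allP v0|i _]; last by rewrite -expr2 sqr_ge0.
apply/matrixP => i j; rewrite ord1 mxE.
by have /(_ (mem_index_enum i)) := v0 i; rewrite mulf_eq0 orbb => /eqP.
Qed.

Lemma bform_mulmx n (M : 'M[R]_n) u v : bform M u v = (u^T *m M *m v) 0 0.
Proof. by rewrite /bform /vdot mulmxA. Qed.

Lemma bformC n (M : 'M[R]_n) u v : M^T = M -> bform M u v = bform M v u.
Proof. by move=> sM; rewrite /bform -{1}sM -vdot_mulmxl vdotC. Qed.

Lemma qform_sum n (M : 'M[R]_n) v :
  qform M v = \sum_i \sum_j v i 0 * M i j * v j 0.
Proof.
rewrite /qform /bform vdot_sum; apply: eq_bigr => i _.
by rewrite mxE mulr_sumr; apply: eq_bigr => j _; rewrite mulrA.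
Qed.

Lemma qformD n (M N : 'M[R]_n) v : qform (M + N) v = qform M v + qform N v.
Proof. by rewrite /qform /bform mulmxDl vdotDr. Qed.

Lemma qformN n (M : 'M[R]_n) v : qform (- M) v = - qform M v.
Proof. by rewrite /qform /bform mulNmx /vdot mulmxN mxE. Qed.

Lemma qformB n (M N : 'M[R]_n) v : qform (M - N) v = qform M v - qform N v.
Proof. by rewrite qformD qformN. Qed.

Lemma qform0 n (v : 'cV[R]_n) : qform 0 v = 0.
Proof. by rewrite /qform /bform mul0mx /vdot mulmx0 mxE. Qed.

Lemma qform_vec0 n (M : 'M[R]_n) : qform M 0 = 0.
Proof. by rewrite qform_sum big1 // => i _; rewrite big1 // => j _; rewrite mxE !mul0r. Qed.

Lemma qform_scalar n a (v : 'cV[R]_n) : qform a%:M v = a * vdot v v.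
Proof. by rewrite /qform /bform mul_scalar_mx vdotZr. Qed.

Lemma qformZ n (M : 'M[R]_n) a v : qform M (a *: v) = a ^+ 2 * qform M v.
Proof. by rewrite /qform /bform -scalemxAr vdotZl vdotZr mulrA. Qed.

Lemma qform_mulmx n k (M : 'M[R]_(n, k)) (N : 'M[R]_(k, n)) v :
  qform (M *m N) v = vdot (M^T *m v) (N *m v).
Proof. by rewrite /qform /bform vdot_mulmxl trmxK mulmxA. Qed.

Lemma qform_addZ n (M : 'M[R]_n) u w s : M^T = M ->
  qform M (u + s *: w) = qform M u + 2 * s * bform M u w + s ^+ 2 * qform M w.
Proof.
move=> sM; rewrite /qform [bform M (u + _) _]/bform mulmxDr -scalemxAr.
rewrite !(vdotDl, vdotDr, vdotZl, vdotZr) -!/(bform _ _ _) (bformC u) //.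
ring.
Qed.

Lemma sqr_le_of_quadratic_ge0 a b c : 0 <= a ->
  (forall s, 0 <= a * s ^+ 2 + 2 * b * s + c) -> b ^+ 2 <= a * c.
Proof.
move=> a0 q0; have [a0'|apos] := eqVneq a 0; last first.
  have apos' : 0 < a by rewrite lt_def apos.
  have := q0 (- b / a).
  have -> : a * (- b / a) ^+ 2 + 2 * b * (- b / a) + c = (a * c - b ^+ 2) / a.
    by field.
  by rewrite ler_pdivlMr // mul0r subr_ge0.
rewrite a0' mul0r; have [->|b0] := eqVneq b 0; first by rewrite expr0n.
have := q0 (- (1 + `|c|) / (2 * b)); rewrite a0'.
have -> : 0 * (- (1 + `|c|) / (2 * b)) ^+ 2 + 2 * b * (- (1 + `|c|) / (2 * b)) + c
    = c - `|c| - 1 by field.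
by have := ler_norm c; lra.
Qed.

Lemma vdot_col n (Q : 'M[R]_n) i j : vdot (col i Q) (col j Q) = (Q^T *m Q) i j.
Proof. by rewrite vdot_sum mxE; apply: eq_bigr => k _; rewrite !mxE. Qed.

Definition entry_abs_sum m n (M : 'M[R]_(m, n)) : R := \sum_i \sum_j `|M i j|.

Lemma entry_abs_sum_ge0 m n (M : 'M[R]_(m, n)) : 0 <= entry_abs_sum M.
Proof. by apply: sumr_ge0 => i _; apply: sumr_ge0. Qed.

Lemma abs_entry_mul_le_vdot m (v : 'cV[R]_m) i j : `|v i 0 * v j 0| <= vdot v v.
Proof.
have sqr_le k : v k 0 ^+ 2 <= vdot v v.
  rewrite vdot_sum (bigD1 k) //= -expr2 lerDl.
  by apply: sumr_ge0 => l _; rewrite -expr2 sqr_ge0.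
have := sqr_le i; have := sqr_le j; rewrite normrM -!(real_normK (num_real (v _ 0))).
have := sqr_ge0 (`|v i 0| - `|v j 0|); rewrite sqrrB; lra.
Qed.

Lemma qform_abs_le n (M : 'M[R]_n) v : `|qform M v| <= entry_abs_sum M * vdot v v.
Proof.
rewrite qform_sum mulr_suml; apply: le_trans (ler_norm_sum _ _ _) _.
apply: ler_sum => i _; rewrite mulr_suml; apply: le_trans (ler_norm_sum _ _ _) _.
apply: ler_sum => j _; rewrite mulrAC normrM mulrC.
by apply: ler_wpM2l => //; exact: abs_entry_mul_le_vdot.
Qed.

Definition mxdot m n (M N : 'M[R]_(m, n)) : R := \sum_i \sum_j M i j * N i j.

Lemma mxdot_ge0 m n (M : 'M[R]_(m, n)) : 0 <= mxdot M M.
Proof. by apply: sumr_ge0 => i _; apply: sumr_ge0 => j _; rewrite -expr2 sqr_ge0. Qed.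

Lemma mxdot_eq0 m n (M : 'M[R]_(m, n)) : mxdot M M = 0 -> M = 0.
Proof.
have sqr_ge0' i j : 0 <= M i j * M i j by rewrite -expr2 sqr_ge0.
move=> /eqP; rewrite /mxdot psumr_eq0 => [/allP M0|i _]; last exact: sumr_ge0.
apply/matrixP => i j; have := M0 i (mem_index_enum i).
rewrite psumr_eq0 // => /allP /(_ j (mem_index_enum j)).
by rewrite mulf_eq0 orbb mxE => /eqP.
Qed.

Lemma mxdotDr m n (M N P : 'M[R]_(m, n)) : mxdot M (N + P) = mxdot M N + mxdot M P.
Proof.
rewrite /mxdot -big_split; apply: eq_bigr => i _; rewrite -big_split.
by apply: eq_bigr => j _; rewrite mxE mulrDr.
Qed.

Lemma mxdot_tr m n (M N : 'M[R]_(m, n)) : mxdot M^T N^T = mxdot M N.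
Proof.
rewrite /mxdot exchange_big.
by apply: eq_bigr => i _; apply: eq_bigr => j _; rewrite !mxE.
Qed.

Lemma mxdot_mulmxr_le n (M L : 'M[R]_n) :
  mxdot M (M *m L) <= entry_abs_sum L * mxdot M M.
Proof.
rewrite /mxdot mulr_sumr; apply: ler_sum => i _.
have -> : \sum_j M i j * (M *m L) i j = qform L (row i M)^T.
  rewrite qform_sum exchange_big; apply: eq_bigr => j _.
  rewrite mxE mulr_sumr; apply: eq_bigr => k _; rewrite !mxE; ring.
have -> : \sum_j M i j * M i j = vdot (row i M)^T (row i M)^T.
  by rewrite vdot_sum; apply: eq_bigr => j _; rewrite !mxE.
exact: le_trans (ler_norm _) (qform_abs_le _ _).
Qed.

Lemma mxdot_mulmxl_le n (M L : 'M[R]_n) :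
  mxdot M (L^T *m M) <= entry_abs_sum L * mxdot M M.
Proof. by rewrite -mxdot_tr trmx_mul trmxK -(mxdot_tr M) mxdot_mulmxr_le. Qed.

End QuadraticForm.

Section PsdMatrix.
Variable R : realType.

Lemma psd_mxP n (M : 'M[R]_n) :
  psd_mx M <-> M^T = M /\ forall v, 0 <= qform M v.
Proof. by rewrite /psd_mx /symmetric_mx; under eq_forall do rewrite -bform_mulmx. Qed.

Lemma psd_bform_sqr_le n (M : 'M[R]_n) u w : psd_mx M ->
  bform M u w ^+ 2 <= qform M u * qform M w.
Proof.
move=> /psd_mxP[sM M0]; rewrite mulrC; apply: sqr_le_of_quadratic_ge0 => // s.
suff -> : qform M w * s ^+ 2 + 2 * bform M u w * s + qform M u = qform M (u + s *: w).
  exact: M0.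
by rewrite qform_addZ //; ring.
Qed.

Lemma psd_qform_eq0 n (M : 'M[R]_n) v : psd_mx M -> qform M v = 0 -> M *m v = 0.
Proof.
move=> psdM qv0; apply/matrixP => j k; rewrite ord1 [RHS]mxE.
have := psd_bform_sqr_le (delta_mx j 0) v psdM; rewrite qv0 mulr0.
rewrite /bform vdot_sum (bigD1 j) //= big1 => [|i /negbTE ij]; last by rewrite mxE ij mul0r.
rewrite mxE !eqxx mul1r addr0 => h.
by apply/eqP; rewrite -sqrf_eq0 eq_le h sqr_ge0.
Qed.

Lemma psd_bform_abs_le n (P M : 'M[R]_n) u w :
  psd_mx P -> psd_mx (M - P) -> `|bform P u w| <= Num.sqrt (qform M u * qform M w).
Proof.
move=> psdP /psd_mxP[_ MP]; have /psd_mxP[_ P0] := psdP.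
have le_M v : 0 <= qform P v <= qform M v.
  by rewrite P0 /= -subr_ge0 -qformB MP.
rewrite -sqrtr_sqr; apply: ler_wsqrtr; apply: le_trans (psd_bform_sqr_le u w psdP) _.
have /andP[? ?] := le_M u; have /andP[? ?] := le_M w; exact: ler_pM.
Qed.

End PsdMatrix.

Section RealFunctions.
Variable R : realType.
Implicit Types (f df : R -> R) (d k s t T : R).

Lemma is_derive_expRM k t : is_derive t 1 (fun s => expR (k * s)) (k * expR (k * t)).
Proof.
have dk : is_derive t 1 ( *%R k) k.
  by rewrite -[X in is_derive _ _ _ X]mulr1; exact: is_deriveZ.
by rewrite mulrC; exact: (is_derive1_comp (is_derive_expR (k * t)) dk).
Qed.

Lemma is_derive_continuous f t (d : R) : is_derive t 1 f d -> {for t, continuous f}.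
Proof. by case=> df _; apply/differentiable_continuous/derivable1_diffP. Qed.

Lemma derive_gt0_near_left f t (d : R) : is_derive t 1 f d -> 0 < d ->
  \forall s \near t^'-, f s < f t.
Proof.
move=> /is_derive1_caratheodory[g [fE gt gtd]] d0.
have gpos : \forall s \near t^'-, 0 < g s.
  by apply: (cvgr_gt _ (cvg_at_left_filter gt)); rewrite gtd.
near=> s; rewrite -subr_lt0 fE pmulr_rlt0; last by near: s; exact: gpos.
by rewrite subr_lt0; near: s; exact: nbhs_left_lt.
Unshelve. all: by end_near. Qed.

Lemma continuous_within_0T f T : f @ 0^'+ --> f 0 ->
  (forall s, 0 < s -> {for s, continuous f}) -> {within `[0, T], continuous f}.
Proof.
move=> f0 fc; apply: (@continuous_subspaceW _ _ `[0, T] `[0, +oo[).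
  by move=> x /=; rewrite !in_itv /= => /andP[->].
apply/continuous_within_itvcyP; split => // s; rewrite in_itv /= andbT.
exact: fc.
Qed.

Lemma gronwall f df k T : 0 <= T -> f @ 0^'+ --> f 0 ->
  (forall s, 0 < s -> is_derive s 1 f (df s)) ->
  (forall s, 0 < s < T -> df s <= k * f s) ->
  f T <= expR (k * T) * f 0.
Proof.
move=> T0 f0 fd fle; have [<-|Tpos] := eqVneq 0 T; first by rewrite mulr0 expR0 mul1r.
have {}Tpos : 0 < T by rewrite lt_def eq_sym Tpos.
pose h s := expR (- k * s) * f s.
have hd s : 0 < s -> is_derive s 1 h (expR (- k * s) * (df s - k * f s)).
  move=> s0; have := is_deriveM (is_derive_expRM (- k) s) (fd s s0).
  by rewrite /GRing.scale /=; congr is_derive; ring.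
have hc : {within `[0, T], continuous h}.
  apply: continuous_within_0T => [|s s0]; last exact: is_derive_continuous (hd s s0).
  apply: cvgM => //; apply: cvg_at_right_filter.
  exact: is_derive_continuous (is_derive_expRM _ _).
have hd' s : s \in `]0, T[%R -> is_derive s 1 h (expR (- k * s) * (df s - k * f s)).
  by rewrite in_itv => /andP[s0 _]; exact: hd.
have [c /[!in_itv] /= /andP[c0 cT]] := MVT Tpos hd' hc.
rewrite /h !mulr0 expR0 mul1r subr0 => hT.
have : expR (- k * T) * f T <= f 0.
  rewrite -subr_le0 hT pmulr_lle0 // pmulr_rle0 ?expR_gt0 //.
  by rewrite subr_le0 fle // c0 cT.
move=> /(ler_wpM2l (ltW (expR_gt0 (k * T)))).
by rewrite mulrA -expRD mulNr addrN expR0 mul1r.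
Qed.

Lemma ge0_at_left_limit f t : 0 < t -> {for t, continuous f} ->
  (forall s, 0 <= s < t -> 0 < f s) -> 0 <= f t.
Proof.
move=> t0 fc fpos; apply: (ler_cvg_to (cvg_cst 0) (cvg_at_left_filter fc)).
near=> s; apply/ltW/fpos; apply/andP; split; near: s.
  exact: nbhs_left_ge.
exact: nbhs_left_lt.
Unshelve. all: by end_near. Qed.

Lemma derive_le0_at_first_zero f t d : 0 < t -> is_derive t 1 f d ->
  (forall s, 0 <= s < t -> 0 < f s) -> f t = 0 -> d <= 0.
Proof.
move=> t0 fd fpos ft0; rewrite leNgt; apply/negP => d0.
have : \forall s \near t^'-, False.
  have fneg := derive_gt0_near_left fd d0.
  near=> s; have : f s < 0 by rewrite -ft0; near: s.
  rewrite ltNge ltW // fpos //; apply/andP; split; near: s.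
    exact: nbhs_left_ge.
  exact: nbhs_left_lt.
by case/filter_ex.
Unshelve. all: by end_near. Qed.

End RealFunctions.

Section MatrixCurves.
Variable R : realType.

Lemma cvg_entry_sum (T : Type) (F : set_system T) (phi : R -> R) m n
    (Z : T -> 'M[R]_(m, n)) (L : 'M[R]_(m, n)) :
  Filter F -> continuous phi -> (forall i j, Z x i j @[x --> F] --> L i j) ->
  \sum_i \sum_j phi (Z x i j) @[x --> F] --> \sum_i \sum_j phi (L i j).
Proof.
move=> FF phic ZL; apply: cvg_big => [|i _]; first exact: add_continuous.
apply: cvg_big => [|j _]; first exact: add_continuous.
by apply: continuous_cvg; [exact: phic | exact: ZL].
Qed.

Lemma cvg_entry_abs_sum (T : Type) (F : set_system T) m n
    (Z : T -> 'M[R]_(m, n)) (L : 'M[R]_(m, n)) :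
  Filter F -> (forall i j, Z x i j @[x --> F] --> L i j) ->
  entry_abs_sum (Z x) @[x --> F] --> entry_abs_sum L.
Proof. by move=> FF; apply: cvg_entry_sum => // a; exact: norm_continuous. Qed.

Lemma cvg_mxdot (T : Type) (F : set_system T) m n
    (Z : T -> 'M[R]_(m, n)) (L : 'M[R]_(m, n)) :
  Filter F -> (forall i j, Z x i j @[x --> F] --> L i j) ->
  mxdot (Z x) (Z x) @[x --> F] --> mxdot L L.
Proof.
move=> FF; apply: (cvg_entry_sum (phi := fun a => a * a)) => // a.
exact: (@continuousM _ _ id id).
Qed.

Lemma cvg_entries_skew (T : Type) (F : set_system T) n (Z : T -> 'M[R]_n) (L : 'M[R]_n) :
  Filter F -> (forall i j, Z x i j @[x --> F] --> L i j) ->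
  forall i j, (Z x - (Z x)^T) i j @[x --> F] --> (L - L^T) i j.
Proof. by move=> FF ZL i j; rewrite !mxE; under eq_cvg do rewrite !mxE; exact: cvgB. Qed.

Lemma cvg_entries_submul (T : Type) (F : set_system T) n m (N : 'M[R]_(n, m))
    (P : 'M[R]_(n, m)) (Z : T -> 'M[R]_m) (L : 'M[R]_m) :
  Filter F -> (forall i j, Z x i j @[x --> F] --> L i j) ->
  forall i j, (N - P *m Z x) i j @[x --> F] --> (N - P *m L) i j.
Proof.
move=> FF ZL i j; rewrite !mxE; under eq_cvg do rewrite !mxE.
apply: cvgB; first exact: cvg_cst.
apply: cvg_big => [|k _]; first exact: add_continuous.
exact: cvgMl_tmp.
Qed.

Lemma qform_tr_continuous n (M : 'M[R]_n) : continuous (fun w : 'rV[R]_n => qform M w^T).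
Proof.
have -> : (fun w : 'rV[R]_n => qform M w^T) =
    fun w => \sum_i \sum_j w 0 i * M i j * w 0 j.
  by apply/funext => w; rewrite qform_sum; under eq_bigr do under eq_bigr do rewrite !mxE.
apply: continuous_big => [|i _]; first exact: add_continuous.
apply: continuous_big => [|j _ w]; first exact: add_continuous.
apply: (@continuousM _ _ (fun w : 'rV[R]_n => w 0 i * M i j) (fun w => w 0 j)).
  apply: (@continuousM _ _ (fun w : 'rV[R]_n => w 0 i) (fun=> M i j)).
    exact: coord_continuous.
  exact: cst_continuous.
exact: coord_continuous.
Qed.

Lemma qform_derive n (Z : R -> 'M[R]_n) (D : 'M[R]_n) (t : R) (v : 'cV[R]_n) :
  (forall i j, is_derive t 1 (fun s => Z s i j) (D i j)) ->
  is_derive t 1 (fun s => qform (Z s) v) (qform D v).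
Proof.
move=> dZ.
have -> : (fun s => qform (Z s) v) =
    \sum_i \sum_j ((v i 0 * v j 0) \*: (fun s => Z s i j)).
  apply/funext => s; rewrite qform_sum fct_sumE; apply: eq_bigr => i _.
  by rewrite fct_sumE; apply: eq_bigr => j _; rewrite /GRing.scale /= mulrAC.
rewrite qform_sum.
have -> : \sum_i \sum_j v i 0 * D i j * v j 0 = \sum_i \sum_j (v i 0 * v j 0) *: D i j.
  by apply: eq_bigr => i _; apply: eq_bigr => j _; rewrite /GRing.scale /= mulrAC.
by apply: is_derive_sum => i; apply: is_derive_sum => j; exact: is_deriveZ.
Qed.

Lemma mxdot_derive m n (Z : R -> 'M[R]_(m, n)) (D : 'M[R]_(m, n)) (t : R) :
  (forall i j, is_derive t 1 (fun s => Z s i j) (D i j)) ->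
  is_derive t 1 (fun s => mxdot (Z s) (Z s)) (2 * mxdot (Z t) D).
Proof.
move=> dZ.
have -> : (fun s => mxdot (Z s) (Z s)) =
    \sum_i \sum_j ((fun s => Z s i j) * (fun s => Z s i j)).
  apply/funext => s; rewrite /mxdot fct_sumE; apply: eq_bigr => i _.
  by rewrite fct_sumE.
have -> : 2 * mxdot (Z t) D = \sum_i \sum_j (Z t i j *: D i j + Z t i j *: D i j).
  rewrite /mxdot mulr_sumr; apply: eq_bigr => i _; rewrite mulr_sumr.
  by apply: eq_bigr => j _; rewrite /GRing.scale /=; ring.
by apply: is_derive_sum => i; apply: is_derive_sum => j; exact: is_deriveM.
Qed.

End MatrixCurves.

Section PositiveDefinite.
Variable R : realType.

Definition posdef n (M : 'M[R]_n) := forall v : 'cV[R]_n, v != 0 -> 0 < qform M v.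

Lemma posdef_qform_ge0 n (M : 'M[R]_n) v : posdef M -> 0 <= qform M v.
Proof. by move=> pM; have [->|/pM/ltW//] := eqVneq v 0; rewrite qform_vec0. Qed.

Lemma posdef_coercive n (M : 'M[R]_n) : posdef M ->
  exists2 mu, 0 < mu & forall v : 'cV[R]_n, mu * vdot v v <= qform M v.
Proof.
(* The Euclidean unit sphere, in row vectors because [bounded_closed_compact] is
   stated for ['rV]. *)
move=> pM; pose S := [set w : 'rV[R]_n | qform 1%:M w^T = 1].
have normalize v : v != 0 -> exists2 w, S w & qform M v = vdot v v * qform M w^T.
  move=> v0; have d0 := vdot_gt0 v0; set d := vdot v v in d0 *.
  have sq : (Num.sqrt d)^-1 * (Num.sqrt d)^-1 * d = 1.
    by rewrite -expr2 exprVn sqr_sqrtr ?ltW // mulVf ?gt_eqF.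
  exists ((Num.sqrt d)^-1 *: v)^T; rewrite /S /= trmxK.
    by rewrite qform_scalar mul1r vdotZl vdotZr mulrA -/d sq.
  by rewrite qformZ mulrA [d * _]mulrC expr2 sq mul1r.
have [[v0 /normalize [w Sw _]]|no_nonzero] := pselect (exists v : 'cV[R]_n, v != 0); last first.
  exists 1 => // v; have [->|v0] := eqVneq v 0; last by case: no_nonzero; exists v.
  by rewrite qform_vec0 /vdot mulmx0 mxE mulr0.
have S_compact : compact S.
  apply: bounded_closed_compact.
    exists 1; split => // r r1 u /= Su; apply: le_trans (ltW r1).
    have -> : `|u| = mx_norm u by []. rewrite mx_normrE.
    apply: bigmax_le => // -[i j] _ /=; rewrite ord1 -[`|u 0 j|]sqrtr_sqr -[1]sqrtr1.
    rewrite ler_sqrt // -Su qform_scalar mul1r; have := abs_entry_mul_le_vdot u^T j j.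
    by rewrite !mxE normrM -expr2 real_normK ?num_real.
  rewrite (_ : S = (fun w => qform 1%:M w^T) @^-1` [set x | x = 1]) //.
  by apply: closed_comp; [move=> x _; exact: qform_tr_continuous | exact: closed_eq].
have qM_cont : {within S, continuous (fun w : 'rV[R]_n => qform M w^T)}.
  by apply: continuous_subspaceT; exact: qform_tr_continuous.
have [c /[!inE] Sc cmin] := EVT_min_rV (ex_intro _ w Sw) S_compact qM_cont.
have c0 : c^T != 0.
  by apply: contra_eq_neq Sc => ->; rewrite qform_vec0 eq_sym oner_neq0.
exists (qform M c^T); first exact: pM.
move=> v; have [->|/normalize[u Su ->]] := eqVneq v 0.
  by rewrite qform_vec0 /vdot mulmx0 mxE mulr0.
by rewrite mulrC ler_wpM2l ?vdot_ge0 // cmin // inE.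
Qed.

Lemma posdef_near (T : Type) (F : set_system T) n (Z : T -> 'M[R]_n) (M : 'M[R]_n) :
  Filter F -> (forall i j, Z x i j @[x --> F] --> M i j) -> posdef M ->
  \forall x \near F, posdef (Z x).
Proof.
move=> FF ZM /posdef_coercive[mu mu0 Mmu].
have : entry_abs_sum (Z x - M) @[x --> F] --> 0.
  have -> : 0 = entry_abs_sum (0 : 'M[R]_n).
    by rewrite /entry_abs_sum big1 // => i _; rewrite big1 // => j _; rewrite mxE normr0.
  apply: cvg_entry_abs_sum => i j; under eq_cvg do rewrite !mxE.
  have := cvgB (ZM i j) (cvg_cst (M i j)); rewrite subrr mxE; exact.
move=> /(cvgr_lt 0)/(_ mu mu0); apply: filterS => x small v v0.
have d0 := vdot_gt0 v0.
have /ler_normlP[+ _] := qform_abs_le (Z x - M) v; rewrite qformB.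
have : entry_abs_sum (Z x - M) * vdot v v < mu * vdot v v by rewrite ltr_pM2r.
have := Mmu v; lra.
Qed.

Lemma posdef_of_posdef_before n (Z : R -> 'M[R]_n) (D : 'M[R]_n) (t0 : R) :
  0 < t0 -> (forall i j, is_derive t0 1 (fun s => Z s i j) (D i j)) ->
  (Z t0)^T = Z t0 -> (forall s, 0 <= s < t0 -> posdef (Z s)) ->
  (forall v, v != 0 -> Z t0 *m v = 0 -> 0 < qform D v) ->
  posdef (Z t0).
Proof.
move=> t0_gt0 dZ sZ pd_before bar; apply: contrapT => npd0.
have qZ_deriv v := qform_derive v dZ.
have qZ_ge0 v : 0 <= qform (Z t0) v.
  have [->|v0] := eqVneq v 0; first by rewrite qform_vec0.
  apply: ge0_at_left_limit t0_gt0 (is_derive_continuous (qZ_deriv v)) _.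
  by move=> s /pd_before; exact.
have [c c0 qc0] : exists2 c, c != 0 & qform (Z t0) c = 0.
  move: npd0 => /existsNP[c /not_implyP[c0 /negP]]; rewrite -leNgt => cle.
  by exists c => //; apply/eqP; rewrite eq_le cle qZ_ge0.
have Zc0 : Z t0 *m c = 0.
  by apply: psd_qform_eq0 qc0; apply/psd_mxP; split; [exact: sZ | exact: qZ_ge0].
have := bar c c0 Zc0; rewrite ltNge (derive_le0_at_first_zero t0_gt0 (qZ_deriv c)) //.
by move=> s /pd_before; exact.
Qed.

Lemma posdef_barrier n (Z D : R -> 'M[R]_n) (T : R) :
  (forall i j, Z s i j @[s --> 0^'+] --> Z 0 i j) ->
  (forall t : R, 0 < t -> forall i j, is_derive t 1 (fun s => Z s i j) (D t i j)) ->
  (forall t, 0 < t -> (Z t)^T = Z t) ->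
  posdef (Z 0) ->
  (forall t v, 0 < t <= T -> v != 0 -> Z t *m v = 0 -> 0 < qform (D t) v) ->
  forall t, 0 <= t <= T -> posdef (Z t).
Proof.
move=> Z0 dZ sZ pd0 bar t1 /andP[t1_ge0 t1T]; apply: contrapT => npd1.
(* [t0] is the first time at which [Z] fails to be positive definite. *)
pose A := [set t | 0 <= t <= t1 /\ ~ posdef (Z t)].
have A1 : A t1 by split; rewrite ?t1_ge0 ?lexx.
have A_lb : lbound A 0 by move=> t [/andP[]].
have A_inf : has_inf A by split; [exists t1 | exists 0].
set t0 := inf A.
have t0_le s : A s -> t0 <= s by move=> As; apply: ge_inf => //; exists 0.
have t0_ge0 : 0 <= t0 by apply: lb_le_inf => //; exists t1.
have Zcont i j : Z s i j @[s --> t0^'+] --> Z t0 i j.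
  have [t0_0|t0_neq0] := eqVneq t0 0; first by rewrite t0_0; exact: Z0.
  apply: cvg_at_right_filter; apply: is_derive_continuous (dZ t0 _ i j).
  by rewrite lt_def t0_neq0.
have npd0 : ~ posdef (Z t0).
  move=> pdt0; have : \forall s \near t0^'+, posdef (Z s) by exact: posdef_near.
  rewrite /at_right /within => /nbhs_ballP[e e0 pd_right].
  have [s As se] := inf_adherent e0 A_inf.
  have [st|st] := eqVneq s t0; first by move: As; rewrite st => -[].
  have s_gt : t0 < s by rewrite lt_def st t0_le.
  case: As => _; apply; apply: (pd_right s _ s_gt).
  rewrite -ball_normE /ball_ /= distrC ger0_norm; last by rewrite subr_ge0 ltW.
  by move: se; rewrite -/t0; lra.
have t0_gt0 : 0 < t0.
  by rewrite lt_def t0_ge0 andbT; apply: contra_notN npd0 => /eqP ->.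
apply/npd0/(posdef_of_posdef_before t0_gt0 (dZ t0 t0_gt0) (sZ t0 t0_gt0)).
  move=> s /andP[s0 st]; apply: contrapT => npd.
  have As : A s by split=> //; rewrite s0 (le_trans (ltW st)) ?t0_le.
  by have := t0_le s As; rewrite leNgt st.
by move=> v; apply: bar; rewrite t0_gt0 (le_trans (t0_le _ A1) t1T).
Qed.

Lemma posdef_exp_shift n (Y DY : R -> 'M[R]_n) (k T e : R) :
  0 <= k -> 0 < e <= expR (- k * T) ->
  (forall i j, Y s i j @[s --> 0^'+] --> Y 0 i j) ->
  (forall t : R, 0 < t -> forall i j, is_derive t 1 (fun s => Y s i j) (DY t i j)) ->
  (forall t, 0 <= t -> (Y t)^T = Y t) ->
  (forall v, 0 <= qform (Y 0) v) ->
  (forall t mu v, 0 < t <= T -> 0 < mu <= 1 -> v != 0 -> Y t *m v = - mu *: v ->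
     0 < qform (DY t) v + k * mu * vdot v v) ->
  forall t, 0 <= t <= T -> posdef (Y t + (e * expR (k * t))%:M).
Proof.
move=> k0 /andP[e0 eT] Y0 dY sY Y0ge0 bar.
(* A kernel vector of the shifted matrix at time [t] is an eigenvector of [Y t] for
   [-mu] with [mu = e exp(k t)], and [e <= exp(-k T)] keeps [mu <= 1]. *)
apply: (posdef_barrier (D := fun s => DY s + (e * (k * expR (k * s)))%:M)).
- move=> i j; rewrite !mxE; under eq_cvg do rewrite !mxE.
  apply: cvgD; first exact: Y0.
  apply: cvgMn; apply: cvgMl_tmp; apply: cvg_at_right_filter.
  exact: is_derive_continuous (is_derive_expRM k 0).
- move=> t t0 i j; rewrite !mxE; under eq_fun do rewrite !mxE.
  apply: is_deriveD; first exact: dY.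
  by case: (i == j); [exact: is_deriveZ (is_derive_expRM k t) | exact: is_derive_cst].
- by move=> t /ltW /sY; rewrite linearD /= tr_scalar_mx => ->.
- move=> v v0; rewrite qformD qform_scalar mulr0 expR0 mulr1.
  by rewrite ltr_wpDl ?Y0ge0 // mulr_gt0 // vdot_gt0.
- move=> t v /andP[t0 tT] v0; rewrite mulmxDl mul_scalar_mx => /eqP.
  rewrite addr_eq0 -scaleNr => /eqP Yv.
  have shift_le1 : e * expR (k * t) <= 1.
    apply: le_trans (_ : expR (- k * T) * expR (k * T) <= 1).
      apply: ler_pM; rewrite ?expR_ge0 ?(ltW e0) // ler_expR.
      exact: ler_wpM2l.
    by rewrite -expRD mulNr addNr expR0.
  have := bar t (e * expR (k * t)) v; rewrite t0 tT mulr_gt0 ?expR_gt0 // shift_le1 v0.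
  by rewrite qformD qform_scalar mulrCA => /(_ isT isT isT Yv).
Qed.

Lemma psd_barrier n (Y DY : R -> 'M[R]_n) (k T : R) :
  0 <= k ->
  (forall i j, Y s i j @[s --> 0^'+] --> Y 0 i j) ->
  (forall t : R, 0 < t -> forall i j, is_derive t 1 (fun s => Y s i j) (DY t i j)) ->
  (forall t, 0 <= t -> (Y t)^T = Y t) ->
  psd_mx (Y 0) ->
  (forall t mu v, 0 < t <= T -> 0 < mu <= 1 -> v != 0 -> Y t *m v = - mu *: v ->
     0 < qform (DY t) v + k * mu * vdot v v) ->
  forall t, 0 <= t <= T -> psd_mx (Y t).
Proof.
move=> k0 Y0 dY sY /psd_mxP[_ Y0ge0] bar t tT; apply/psd_mxP.
split=> [|v]; first by apply: sY; case/andP: tT.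
set c := expR (k * t) * vdot v v.
have : qform (Y t) v + e * c @[e --> 0^'+] --> qform (Y t) v + 0 * c.
  apply: cvgD; first exact: cvg_cst.
  by apply: cvgMr_tmp; apply: cvg_at_right_filter; exact: cvg_id.
rewrite mul0r addr0 => /(ler_cvg_to (cvg_cst 0)); apply.
near=> e; rewrite mulrA -(qform_scalar (e * _)) -qformD.
have e_bounds : 0 < e <= expR (- k * T).
  apply/andP; split; near: e; first exact: nbhs_right_gt.
  by apply: nbhs_right_ltW; exact: expR_gt0.
exact/posdef_qform_ge0/(posdef_exp_shift k0 e_bounds Y0 dY sY Y0ge0 bar tT).
Unshelve. all: by end_near. Qed.

End PositiveDefinite.

Section RiccatiAlgebra.
Variables (R : realType) (n b c : nat).
Variables (A : 'M[R]_n) (B : 'M[R]_(n, b)) (C : 'M[R]_(c, n)).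
Local Notation ric := (riccati A B C).

Lemma riccatiB (X Y : 'M[R]_n) : Y^T = Y ->
  ric X - ric Y = (A - B *m B^T *m Y)^T *m (X - Y) + (X - Y) *m (A - B *m B^T *m Y)
                  - (X - Y) *m B *m B^T *m (X - Y).
Proof.
move=> sY.
have -> : (A - B *m B^T *m Y)^T = A^T - Y *m B *m B^T.
  by rewrite linearB /= !trmx_mul trmxK sY mulmxA.
rewrite /riccati !(mulmxDl, mulmxDr, mulmxBl, mulmxBr, mulNmx, mulmxN) !mulmxA.
move: (A^T *m X) (X *m A) (X *m B *m B^T *m X) (C^T *m C) (A^T *m Y) (Y *m A)
  (Y *m B *m B^T *m Y) (Y *m B *m B^T *m X) (X *m B *m B^T *m Y) => ? ? ? ? ? ? ? ? ?.
by apply/matrixP => i j; rewrite !mxE; ring.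
Qed.

Lemma riccati_tr (X : 'M[R]_n) : (ric X)^T = ric X^T.
Proof.
rewrite /riccati linearD linearB linearD /= !trmx_mul !trmxK.
by rewrite !mulmxA [X^T *m A + _]addrC.
Qed.

Lemma riccati_skew (X : 'M[R]_n) :
  ric X - (ric X)^T =
  (A - B *m B^T *m X)^T *m (X - X^T) + (X - X^T) *m (A - B *m B^T *m X).
Proof.
have -> : (A - B *m B^T *m X)^T = A^T - X^T *m B *m B^T.
  by rewrite linearB /= !trmx_mul trmxK mulmxA.
rewrite riccati_tr /riccati !(mulmxDl, mulmxDr, mulmxBl, mulmxBr, mulNmx, mulmxN) !mulmxA.
move: (A^T *m X) (X *m A) (X *m B *m B^T *m X) (C^T *m C) (A^T *m X^T) (X^T *m A)
  (X^T *m B *m B^T *m X^T) (X^T *m B *m B^T *m X) => ? ? ? ? ? ? ? ?.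
by apply/matrixP => i j; rewrite !mxE; ring.
Qed.

Lemma qform_riccati_eigen (X Y : 'M[R]_n) mu v :
  Y^T = Y -> (X - Y)^T = X - Y -> (X - Y) *m v = mu *: v ->
  qform (ric X) v = qform (ric Y) v + 2 * mu * qform (A - B *m B^T *m Y) v
                    - mu ^+ 2 * qform (B *m B^T) v.
Proof.
move=> sY sD Dv.
set L := A - B *m B^T *m Y; set D := X - Y in sD Dv *.
have LD : qform (L^T *m D) v = mu * qform L v.
  by rewrite qform_mulmx trmxK Dv vdotZr vdotC.
have DL : qform (D *m L) v = mu * qform L v by rewrite qform_mulmx sD Dv vdotZl.
have DPD : qform (D *m B *m B^T *m D) v = mu ^+ 2 * qform (B *m B^T) v.
  rewrite -(mulmxA D B) -mulmxA qform_mulmx sD Dv -(mulmxA (B *m B^T)) Dv.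
  rewrite -scalemxAr vdotZl vdotZr.
  by rewrite mulrA -expr2.
rewrite -[ric X](subrK (ric Y)) riccatiB // -/L -/D qformD qformB qformD LD DL DPD.
ring.
Qed.

End RiccatiAlgebra.

Section DRESolution.
Variables (R : realType) (n b c : nat).
Variables (A : 'M[R]_n) (B : 'M[R]_(n, b)) (C : 'M[R]_(c, n)) (X : R -> 'M[R]_n).
Hypothesis solX : DRE_solution A B C X.
Local Notation ric := (riccati A B C).

Let X0 : X 0 = 0. Proof. by case: solX. Qed.

Let X_cvg0 i j : X s i j @[s --> 0^'+] --> X 0 i j.
Proof. by rewrite X0 mxE; case: solX => _ []. Qed.

Let X_derive (t : R) : 0 < t -> forall i j, is_derive t 1 (fun s => X s i j) (ric (X t) i j).
Proof. by move=> t0; case: solX => _ [_ /(_ t t0)]. Qed.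

Let X_cvg (t : R) i j : 0 < t -> X s i j @[s --> t] --> X t i j.
Proof. by move=> t0; exact: is_derive_continuous (X_derive t0 i j). Qed.

Lemma DRE_symmetric t : 0 <= t -> (X t)^T = X t.
Proof.
(* By [riccati_skew], [D = X - X^T] solves [D' = L^T D + D L], so [|D|^2] obeys a
   linear differential inequality on [[0, t]] and vanishes by Gronwall. *)
move=> t0; pose L s := A - B *m B^T *m X s; pose D s := X s - (X s)^T.
pose f s := mxdot (D s) (D s).
have [s1 _ L_max] : exists2 s1, s1 \in `[0, t]%R &
    forall s, s \in `[0, t]%R -> entry_abs_sum (L s) <= entry_abs_sum (L s1).
  apply: EVT_max t0 _; apply: continuous_within_0T => [|s s0].
    by apply: cvg_entry_abs_sum; apply: cvg_entries_submul; exact: X_cvg0.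
  by apply: cvg_entry_abs_sum; apply: cvg_entries_submul => i j; exact: X_cvg.
set K := entry_abs_sum (L s1).
have f_derive (s : R) : 0 < s -> is_derive s 1 f (2 * mxdot (D s) (ric (X s) - (ric (X s))^T)).
  move=> s0; apply: mxdot_derive => i j; under eq_fun do rewrite !mxE.
  have -> : (ric (X s) - (ric (X s))^T) i j = ric (X s) i j - ric (X s) j i.
    by rewrite !mxE.
  exact: is_deriveB (X_derive s0 i j) (X_derive s0 j i).
have f_le s : 0 < s < t -> 2 * mxdot (D s) (ric (X s) - (ric (X s))^T) <= 4 * K * f s.
  move=> /andP[s0 st]; rewrite riccati_skew mxdotDr.
  have Ls : entry_abs_sum (L s) <= K by apply: L_max; rewrite in_itv /= !ltW.
  have f0 : 0 <= f s by exact: mxdot_ge0.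
  have := mxdot_mulmxl_le (D s) (L s); have := mxdot_mulmxr_le (D s) (L s).
  have := ler_wpM2r f0 Ls; rewrite -/(f s) -/(L s); nra.
have f0 : f 0 = 0.
  by rewrite /f /D X0 trmx0 subr0 /mxdot big1 // => i _; rewrite big1 // => j _; rewrite mxE mul0r.
have /gronwall : f s @[s --> 0^'+] --> f 0.
  by apply: cvg_mxdot; apply: cvg_entries_skew; exact: X_cvg0.
move=> /(_ _ _ _ t0 f_derive f_le); rewrite f0 mulr0 => ft_le0.
have /mxdot_eq0 /eqP : f t = 0 by apply/eqP; rewrite eq_le ft_le0 mxdot_ge0.
by rewrite subr_eq0 => /eqP.
Qed.

Lemma DRE_psd t : 0 <= t -> psd_mx (X t).
Proof.
move=> t0; set P := B *m B^T.
pose k := 2 * entry_abs_sum A + entry_abs_sum P + 1.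
have k0 : 0 <= k by rewrite /k !addr_ge0 ?mulr_ge0 ?entry_abs_sum_ge0.
apply: (psd_barrier (k := k) (T := t) (DY := fun s => ric (X s))).
- exact: k0.
- exact: X_cvg0.
- exact: X_derive.
- exact: DRE_symmetric.
- by rewrite X0; apply/psd_mxP; split=> [|v]; rewrite ?trmx0 ?qform0.
- (* Here [v^T Ric(X s) v = |C v|^2 - 2 mu v^T A v - mu^2 |B^T v|^2]. *)
  move=> s mu v /andP[s0 _] /andP[mu0 mu1] v0 Xv.
  rewrite (qform_riccati_eigen A B C (Y := 0) (mu := - mu)) ?trmx0 ?subr0 ?DRE_symmetric ?ltW //.
  rewrite mulmx0 subr0 -/P /riccati !(mulmx0, mul0mx, addr0, subr0, oppr0, add0r).
  rewrite qform_mulmx trmxK sqrrN.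
  have w0 := vdot_gt0 v0; have q0 := vdot_ge0 (C *m v).
  have /ler_normlP[_ hA] := qform_abs_le A v.
  have /ler_normlP[_ hP] := qform_abs_le P v.
  have P0 : 0 <= qform P v by rewrite qform_mulmx vdot_ge0.
  have mu2 : mu ^+ 2 <= mu by rewrite expr2 ger_pMl.
  have := ler_wpM2l (ltW mu0) hA; have := ler_wpM2l (ltW mu0) hP.
  have := ler_wpM2r P0 mu2; have := mulr_gt0 mu0 w0.
  rewrite /k; nra.
- by rewrite t0 lexx.
Qed.

Lemma DRE_le_ARE_solution Xinf : psd_mx Xinf -> ric Xinf = 0 ->
  forall t, 0 <= t -> psd_mx (Xinf - X t).
Proof.
move=> psdXinf ricXinf t t0; have [sXinf _] := psdXinf; set L := A - B *m B^T *m Xinf.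
pose k := 2 * entry_abs_sum L + 1.
have k0 : 0 <= k by rewrite /k addr_ge0 ?mulr_ge0 ?entry_abs_sum_ge0.
apply: (psd_barrier (k := k) (T := t) (Y := fun s => Xinf - X s) (DY := fun s => - ric (X s))).
- exact: k0.
- move=> i j; rewrite !mxE; under eq_cvg do rewrite !mxE.
  by apply: cvgB; [exact: cvg_cst | exact: X_cvg0].
- move=> s s0 i j; under eq_fun do rewrite !mxE.
  have -> : (- ric (X s)) i j = 0 - ric (X s) i j by rewrite mxE sub0r.
  by apply: is_deriveB; exact: X_derive.
- by move=> s s0; rewrite linearB /= sXinf DRE_symmetric.
- by rewrite X0 subr0.
- move=> s mu v /andP[s0 _] /andP[mu0 _] v0 Yv.
  have XYv : (X s - Xinf) *m v = mu *: v by rewrite -opprB mulNmx Yv scaleNr opprK.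
  have sD : (X s - Xinf)^T = X s - Xinf by rewrite linearB /= sXinf DRE_symmetric ?ltW.
  rewrite qformN (qform_riccati_eigen A B C sXinf sD XYv) ricXinf qform0 add0r -/L.
  have w0 := vdot_gt0 v0.
  have /ler_normlP[_ hL] := qform_abs_le L v.
  have P0 : 0 <= qform (B *m B^T) v by rewrite qform_mulmx vdot_ge0.
  have := ler_wpM2l (ltW mu0) hL; have := mulr_gt0 mu0 w0.
  have := mulr_ge0 (sqr_ge0 mu) P0.
  rewrite /k; lra.
- by rewrite t0 lexx.
Qed.

End DRESolution.

Theorem theorem5p2 (R : realType) (n b c : nat)
  (A : 'M[R]_n) (B : 'M[R]_(n, b)) (C : 'M[R]_(c, n))
  (Xinf : 'M[R]_n) (Q : 'M[R]_n) (lam : 'I_n -> R) (X : R -> 'M[R]_n) :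
  stabilizable A B ->
  detectable A C ->
  psd_mx Xinf ->
  riccati A B C Xinf = 0 ->
  Q^T *m Q = 1%:M ->
  (forall i : 'I_n, Xinf *m col i Q = lam i *: col i Q) ->
  (forall i j : 'I_n, (i <= j)%N -> lam j <= lam i) ->
  DRE_solution A B C X ->
  forall (i j : 'I_n) (t : R), 0 <= t ->
    `| ((col i Q)^T *m X t *m col j Q) 0 0 | <= Num.sqrt (lam i * lam j).
Proof.
move=> _ _ psdXinf ricXinf QQ eigQ _ solX i j t t0.
have qform_lam k : qform Xinf (col k Q) = lam k.
  by rewrite /qform /bform eigQ vdotZr vdot_col QQ mxE eqxx mulr1.
rewrite -bform_mulmx -!qform_lam.
exact: psd_bform_abs_le (DRE_psd solX t0) (DRE_le_ARE_solution solX psdXinf ricXinf t0).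
Qed.
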